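(* Consider the following model. Let $\pi_0\in(0,1)$ and $\sigma\in(0,0.25]$. Let $\psi:[0,1]\to\mathbb{R}$ be non-decreasing with $\psi(0)<\psi(1)$. Define $$\pi_1(1)=\frac{(1+4\sigma)\pi_0}{1+4\sigma\pi_0},\qquad \pi_1(0)=\frac{(1-4\sigma)\pi_0}{1-4\sigma\pi_0},$$ $$\Psi(\sigma,\pi_0)=(0.5+2\sigma\pi_0)\,\psi(\pi_1(1))+(0.5-2\sigma\pi_0)\,\psi(\pi_1(0)),$$ $\Phi(S,\sigma,\pi_0)=0.5+\psi(\pi_0)$ and $\Phi(C,\sigma,\pi_0)=0.5+2\sigma\pi_0+\Psi(\sigma,\pi_0)$. The expert chooses the complex rule $C$ if $\Phi(C,\sigma,\pi_0)\ge\Phi(S,\sigma,\pi_0)$ and the simple rule $S$ otherwise. If $\psi$ is linear or convex, then the expert chooses the complex rule.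
   Context: Interpretation: $\pi_0$ is the common prior probability that the expert is competent; $\pi_1(Y)$ is the posterior after the complex rule leads to the correct ($Y=1$) or incorrect ($Y=0$) action, where $\Pr(Y=1)=0.5+2\sigma\pi_0$ under the complex rule; under the simple rule the posterior is $\pi_0$ and the probability of the correct action is $0.5$. $\psi$ is the expert's reputation payoff as a function of the posterior; $\Phi(r,\sigma,\pi_0)$ is the expected total (accuracy plus reputation) payoff from rule $r$. *)

From Stdlib Require Import Reals.
Open Scope R_scope.

(* Posterior after correct (Y=1) and incorrect (Y=0) action under the complex rule. *)
Definition pi1_1 (sigma pi0 : R) : R := ((1 + 4 * sigma) * pi0) / (1 + 4 * sigma * pi0).
Definition pi1_0 (sigma pi0 : R) : R := ((1 - 4 * sigma) * pi0) / (1 - 4 * sigma * pi0).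

Definition Psi (psi : R -> R) (sigma pi0 : R) : R :=
  ((1/2) + 2 * sigma * pi0) * psi (pi1_1 sigma pi0)
  + ((1/2) - 2 * sigma * pi0) * psi (pi1_0 sigma pi0).

Inductive rule : Type := Simple | Complex.

Definition Phi (psi : R -> R) (r : rule) (sigma pi0 : R) : R :=
  match r with
  | Simple => (1/2) + psi pi0
  | Complex => (1/2) + 2 * sigma * pi0 + Psi psi sigma pi0
  end.

Definition expert_choice (psi : R -> R) (sigma pi0 : R) : rule :=
  if Rle_dec (Phi psi Simple sigma pi0) (Phi psi Complex sigma pi0)
  then Complex else Simple.

(* psi is only given on [0,1]; properties are required on [0,1]. *)
Definition nondecreasing_on01 (psi : R -> R) : Prop :=
  forall x y, 0 <= x -> x <= y -> y <= 1 -> psi x <= psi y.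

Definition linear_on01 (psi : R -> R) : Prop :=
  exists a b : R, forall x, 0 <= x <= 1 -> psi x = a * x + b.

Definition convex_on01 (psi : R -> R) : Prop :=
  forall x y t, 0 <= x <= 1 -> 0 <= y <= 1 -> 0 <= t <= 1 ->
    psi (t * x + (1 - t) * y) <= t * psi x + (1 - t) * psi y.

From Stdlib Require Import Reals Lra.
Open Scope R_scope.

(* The complex rule's posteriors are a mean-preserving spread of the prior:
   with weights Pr(Y=1) = 1/2 + 2 sigma pi0 and Pr(Y=0) = 1/2 - 2 sigma pi0 the
   posteriors pi1(1), pi1(0) average back to pi0.  By Jensen's inequality a convex
   (in particular a linear) reputation payoff psi therefore satisfies
   Psi >= psi(pi0), and the complex rule also gains 2 sigma pi0 >= 0 in accuracy. *)

Lemma linear_on01_convex_on01 (psi : R -> R) :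
  linear_on01 psi -> convex_on01 psi.
Proof.
  intros [a [b Hab]] x y t Hx Hy Ht.
  assert (Hz : 0 <= t * x + (1 - t) * y <= 1) by nra.
  rewrite (Hab _ Hz), (Hab _ Hx), (Hab _ Hy). lra.
Qed.

Lemma posterior_mean (sigma pi0 : R) :
  1 + 4 * sigma * pi0 <> 0 -> 1 - 4 * sigma * pi0 <> 0 ->
  (1/2 + 2 * sigma * pi0) * pi1_1 sigma pi0
  + (1/2 - 2 * sigma * pi0) * pi1_0 sigma pi0 = pi0.
Proof. intros. unfold pi1_1, pi1_0. field; lra. Qed.

Lemma Rdiv_in01 (a b : R) : 0 <= a <= b -> 0 < b -> 0 <= a / b <= 1.
Proof.
  intros [Ha Hab] Hb. unfold Rdiv. split.
  - apply Rle_mult_inv_pos; assumption.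
  - rewrite <- (Rinv_r b) by lra.
    apply Rmult_le_compat_r; [left; apply Rinv_0_lt_compat|]; assumption.
Qed.

Lemma pi1_1_in01 (sigma pi0 : R) :
  0 <= sigma -> 0 <= pi0 <= 1 -> 0 <= pi1_1 sigma pi0 <= 1.
Proof.
  intros Hs Hp. unfold pi1_1.
  assert (Hd : 0 < 1 + 4 * sigma * pi0) by nra.
  apply Rdiv_in01; nra.
Qed.

Lemma pi1_0_in01 (sigma pi0 : R) :
  0 <= sigma <= 1/4 -> 0 <= pi0 < 1 -> 0 <= pi1_0 sigma pi0 <= 1.
Proof.
  intros Hs Hp. unfold pi1_0.
  assert (Hd : 0 < 1 - 4 * sigma * pi0) by nra.
  apply Rdiv_in01; nra.
Qed.

Lemma psi_prior_le_Psi (psi : R -> R) (sigma pi0 : R) :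
  convex_on01 psi -> 0 <= sigma <= 1/4 -> 0 <= pi0 < 1 ->
  psi pi0 <= Psi psi sigma pi0.
Proof.
  intros Hconv Hs Hp.
  assert (Hw : 0 <= 1/2 + 2 * sigma * pi0 <= 1) by nra.
  pose proof (Hconv _ _ _ (pi1_1_in01 sigma pi0 ltac:(lra) ltac:(lra))
                (pi1_0_in01 sigma pi0 Hs Hp) Hw) as Jensen.
  replace (1 - (1/2 + 2 * sigma * pi0)) with (1/2 - 2 * sigma * pi0) in Jensen by field.
  rewrite posterior_mean in Jensen by nra.
  exact Jensen.
Qed.

Lemma expert_choice_Complex (psi : R -> R) (sigma pi0 : R) :
  Phi psi Simple sigma pi0 <= Phi psi Complex sigma pi0 ->
  expert_choice psi sigma pi0 = Complex.
Proof.
  intros Hle. unfold expert_choice.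
  destruct (Rle_dec _ _) as [_ | Hnle]; [reflexivity | contradiction].
Qed.

Theorem corollary1 (pi0 sigma : R) (psi : R -> R) :
  0 < pi0 < 1 ->
  0 < sigma <= 1 / 4 ->
  nondecreasing_on01 psi ->
  psi 0 < psi 1 ->
  (linear_on01 psi \/ convex_on01 psi) ->
  expert_choice psi sigma pi0 = Complex.
Proof.
  intros Hp Hs _ _ Hshape.
  assert (Hconv : convex_on01 psi).
  { destruct Hshape as [Hlin | Hconv]; [exact (linear_on01_convex_on01 _ Hlin) | exact Hconv]. }
  apply expert_choice_Complex. simpl.
  pose proof (psi_prior_le_Psi psi sigma pi0 Hconv ltac:(lra) ltac:(lra)).
  nra.
Qed.
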